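(* Let $\mathcal{T}$ be a K3 category and let $A\xrightarrow{i}E\xrightarrow{j}B\xrightarrow{\delta}A[1]$ be a distinguished triangle in $\mathcal{T}$ such that $(A,B)^r=0$ for all $r\le 0$ and $(B,B)^s=0$ for all $s<0$. Then $(A,A)^1+(B,B)^1\le (E,E)^1$.
   Context: All categories are linear over a field $k$ of characteristic $\neq 2$ and of finite type ($\bigoplus_i\mathrm{Hom}(E,F[i])$ finite-dimensional). A K3 category is such a triangulated category in which the double shift $E\mapsto E[2]$ is a Serre functor, i.e. $\mathrm{Hom}(E,F)\cong\mathrm{Hom}(F,E[2])^*$ functorially. Notation: $(E,F)^i:=\dim_k\mathrm{Hom}(E,F[i])$. *)

From HB Require Import structures.
From mathcomp Require Import all_boot all_order all_algebra.
Set Implicit Arguments. Unset Strict Implicit. Unset Printing Implicit Defensive.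
Import Order.TTheory GRing.Theory Num.Theory.
Local Open Scope ring_scope.

Record triangle (O : Type) (H : O -> O -> Type) (S : O -> O) := Tri {
  tX : O; tY : O; tZ : O;
  tf : H tX tY; tg : H tY tZ; th : H tZ (S tX) }.
Arguments Tri {O H S tX tY tZ}.

Record pretri (k : fieldType) := PreTri {
  obj : Type;
  Hm : obj -> obj -> vectType k;
  comp : forall X Y Z : obj, Hm Y Z -> Hm X Y -> Hm X Z;
  idm : forall X : obj, Hm X X;
  sh : obj -> obj;
  shm : forall X Y : obj, Hm X Y -> Hm (sh X) (sh Y);
  dist : triangle Hm sh -> Prop }.
Arguments obj {k}. Arguments Hm {k p}. Arguments comp {k p X Y Z}.
Arguments idm {k p}. Arguments sh {k p}. Arguments shm {k p X Y}.
Arguments dist {k p}.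

Section TriDefs.
Variables (k : fieldType) (T : pretri k).
Local Notation obj := (obj T).

Definition is_iso (X Y : obj) (f : Hm X Y) :=
  exists g : Hm Y X, comp g f = idm X /\ comp f g = idm Y.

Definition is_zero_obj (Z : obj) :=
  forall Y : obj, \dim (fullv : {vspace Hm Z Y}) = 0%N /\
                  \dim (fullv : {vspace Hm Y Z}) = 0%N.

Definition linear_category :=
  [/\ (forall (W X Y Z : obj) (h : Hm Y Z) (g : Hm X Y) (f : Hm W X),
          comp h (comp g f) = comp (comp h g) f),
      (forall (X Y : obj) (f : Hm X Y), comp (idm Y) f = f /\ comp f (idm X) = f),
      (forall (X Y Z : obj) (g : Hm Y Z) (a : k) (f f' : Hm X Y),
          comp g (a *: f + f') = a *: comp g f + comp g f') &
      (forall (X Y Z : obj) (a : k) (g g' : Hm Y Z) (f : Hm X Y),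
          comp (a *: g + g') f = a *: comp g f + comp g' f)].

Definition additive :=
  (exists Z : obj, is_zero_obj Z) /\
  forall X Y : obj, exists (S : obj) (i1 : Hm X S) (i2 : Hm Y S)
                           (p1 : Hm S X) (p2 : Hm S Y),
    [/\ comp p1 i1 = idm X, comp p2 i2 = idm Y, comp p1 i2 = 0,
        comp p2 i1 = 0 & comp i1 p1 + comp i2 p2 = idm S].

Definition shift_autoequivalence :=
  [/\ (forall X : obj, shm (idm X) = idm (sh X)),
      (forall (X Y Z : obj) (g : Hm Y Z) (f : Hm X Y),
          shm (comp g f) = comp (shm g) (shm f)),
      (forall (X Y : obj) (a : k) (f f' : Hm X Y),
          shm (a *: f + f') = a *: shm f + shm f'),
      (forall X Y : obj, bijective (@shm _ T X Y)) &
      (forall Y : obj, exists (X : obj) (f : Hm (sh X) Y), is_iso f)].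

Definition tri_morph (t t' : triangle (@Hm _ T) sh)
  (a : Hm (tX t) (tX t')) (b : Hm (tY t) (tY t')) (c : Hm (tZ t) (tZ t')) :=
  [/\ comp b (tf t) = comp (tf t') a,
      comp c (tg t) = comp (tg t') b &
      comp (shm a) (th t) = comp (th t') c].

Definition tri_iso (t t' : triangle (@Hm _ T) sh) :=
  exists (a : Hm (tX t) (tX t')) (b : Hm (tY t) (tY t')) (c : Hm (tZ t) (tZ t')),
    [/\ tri_morph a b c, is_iso a, is_iso b & is_iso c].

Definition TR1 :=
  [/\ (forall t t', dist t -> tri_iso t t' -> dist t'),
      (forall (X Z : obj), is_zero_obj Z ->
          dist (Tri (idm X) (0 : Hm X Z) (0 : Hm Z (sh X)))) &
      (forall (X Y : obj) (f : Hm X Y),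
          exists (Z : obj) (g : Hm Y Z) (h : Hm Z (sh X)), dist (Tri f g h))].

Definition TR2 :=
  forall (X Y Z : obj) (f : Hm X Y) (g : Hm Y Z) (h : Hm Z (sh X)),
    dist (Tri f g h) <-> dist (Tri g h (- shm f)).

Definition TR3 :=
  forall t t', dist t -> dist t' ->
  forall (a : Hm (tX t) (tX t')) (b : Hm (tY t) (tY t')),
    comp b (tf t) = comp (tf t') a ->
    exists c : Hm (tZ t) (tZ t'), tri_morph a b c.

Definition TR4 :=
  forall (X Y Z Z' X' Y' : obj) (f : Hm X Y) (g : Hm Y Z)
         (u : Hm Y Z') (u' : Hm Z' (sh X))
         (v : Hm Z X') (v' : Hm X' (sh Y))
         (w : Hm Z Y') (w' : Hm Y' (sh X)),
    dist (Tri f u u') -> dist (Tri g v v') -> dist (Tri (comp g f) w w') ->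
    exists (a : Hm Z' Y') (b : Hm Y' X'),
      [/\ dist (Tri a b (comp (shm u) v')),
          comp a u = comp w g, comp w' a = u',
          comp b w = v & comp v' b = comp (shm f) w'].

Definition triangulated :=
  [/\ linear_category, additive, shift_autoequivalence & [/\ TR1, TR2, TR3 & TR4]].

(* (E,F)^i = dim Hom(E, F[i]); for i = -(n+1) < 0 we use the canonical
   identification Hom(E, F[-(n+1)]) = Hom(E[n+1], F). *)
Definition homdim (E F : obj) (i : int) : nat :=
  match i with
  | Posz n => \dim (fullv : {vspace Hm E (iter n sh F)})
  | Negz n => \dim (fullv : {vspace Hm (iter n.+1 sh E) F})
  end.

Definition finite_type :=
  forall E F : obj, exists N : nat, forall i : int, (N < `|i|)%N -> homdim E F i = 0%N.

(* Serre duality with Serre functor [2]: a natural isomorphism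
   Hom(E,F) ~= Hom(F,E[2])^*, encoded as a natural nondegenerate pairing. *)
Definition serre2 (eta : forall E F : obj, Hm E F -> Hm F (sh (sh E)) -> k) :=
  [/\ (forall E F (a : k) (f f' : Hm E F) (p : Hm F (sh (sh E))),
          eta E F (a *: f + f') p = a * eta E F f p + eta E F f' p),
      (forall E F (a : k) (f : Hm E F) (p p' : Hm F (sh (sh E))),
          eta E F f (a *: p + p') = a * eta E F f p + eta E F f p'),
      (forall E F (f : Hm E F), f != 0 -> exists p, eta E F f p != 0) &
   [/\
      (forall E F (p : Hm F (sh (sh E))), p != 0 -> exists f, eta E F f p != 0),
      (forall E F F' (phi : Hm F F') (f : Hm E F) (p : Hm F' (sh (sh E))),
          eta E F' (comp phi f) p = eta E F f (comp p phi)) &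
      (forall E E' F (chi : Hm E' E) (f : Hm E F) (p : Hm F (sh (sh E'))),
          eta E' F (comp f chi) p = eta E F f (comp (shm (shm chi)) p))]].

Definition K3_category :=
  [/\ triangulated, finite_type & exists eta, serre2 eta].

End TriDefs.

(* Consider the triples (f, h, g) in Hom(E,E[1]) x Hom(A,A[1]) x Hom(B,B[1]) with
   f i = i[1] h and j[1] f = g j; they form a linear subspace.  Its projection to
   (h, g) is onto: the obstruction to extending i[1] h along i lies in Hom(B, A[2]),
   which is Serre dual to Hom(A, B) = 0, and the remaining error in g is absorbed
   because j[1] o - : Hom(B, E[1]) -> Hom(B, B[1]) is onto, again as Hom(B, A[2]) = 0.
   Its projection to f is injective: f = 0 forces i[1] h = 0 and g j = 0, so h and g
   factor through Hom(A, B) = 0 or its shift.  Hence (A,A)^1 + (B,B)^1 <= (E,E)^1. *)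

From Pilot Require Import Defs.
From HB Require Import structures.
From mathcomp Require Import all_boot all_order all_algebra.
Set Implicit Arguments. Unset Strict Implicit. Unset Printing Implicit Defensive.
Import Order.TTheory GRing.Theory.
Local Open Scope ring_scope.
(* [all_boot] exports ssrfun's function composition [comp], which would shadow the categorical one. *)
Local Notation comp := Defs.comp.

Section LinearAlgebra.
Variable K : fieldType.

Section LinearFunction.
Variables (U V : lmodType K) (f : U -> V).
Hypothesis f_linear : linear f.
Let F : {linear U -> V} := HB.pack f (GRing.isLinear.Build _ _ _ _ f f_linear).

Lemma linear_fun0 : f 0 = 0. Proof. exact (raddf0 F). Qed.
Lemma linear_funN (x : U) : f (- x) = - f x. Proof. exact (raddfN F x). Qed.
Lemma linear_funD (x y : U) : f (x + y) = f x + f y. Proof. exact (raddfD F x y). Qed.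

End LinearFunction.

Lemma vect_eq0_of_dimvf0 (V : vectType K) : \dim {:V} = 0%N -> forall v : V, v = 0.
Proof. by move=> /eqP; rewrite dimv_eq0 => /eqP V0 v; apply/eqP; rewrite -memv0 -V0 memvf. Qed.

Lemma dimv_le_of_linear_relation (V W U : vectType K) (L : {linear (V * W)%type -> U}) :
    (forall w, exists v, L (v, w) = 0) -> (forall w, L (0, w) = 0 -> w = 0) ->
  (\dim {:W} <= \dim {:V})%N.
Proof.
move=> Ltotal Linj; set S := lker (linfun L).
have img_snd : (linfun snd @: S)%VS = fullv.
  apply/eqP; rewrite eqEsubv subvf; apply/subvP => w _.
  have [v Lvw] := Ltotal w.
  have -> : w = linfun snd (v, w) by rewrite lfunE.
  by apply: memv_img; rewrite memv_ker lfunE /= Lvw.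
have ker_fst : (S :&: lker (linfun fst))%VS = 0%VS.
  apply/eqP; rewrite -subv0; apply/subvP => -[v w].
  rewrite memv_cap !memv_ker !lfunE /= memv0 => /andP[/eqP Lvw /eqP v0].
  by move: Lvw; rewrite v0 => /Linj ->.
rewrite -img_snd (@leq_trans (\dim S)) //.
  by rewrite -[leqRHS](limg_ker_dim (linfun snd)) leq_addl.
by rewrite -(limg_dim_eq ker_fst) dimvS ?subvf.
Qed.

End LinearAlgebra.

Section Triangulated.
Variables (k : fieldType) (T : pretri k).
Hypothesis hT : triangulated T.
Implicit Types X Y Z W : obj T.

Let hL : linear_category T. Proof. by case: hT. Qed.
Let hS : shift_autoequivalence T. Proof. by case: hT. Qed.
Let tr1 : TR1 T. Proof. by case: hT => _ _ _ []. Qed.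
Let tr2 : TR2 T. Proof. by case: hT => _ _ _ []. Qed.
Let tr3 : TR3 T. Proof. by case: hT => _ _ _ []. Qed.

Lemma compmA X Y Z W (h : Hm Z W) (g : Hm Y Z) (f : Hm X Y) :
  comp h (comp g f) = comp (comp h g) f.
Proof. by case: hL => compA _ _ _; apply: compA. Qed.

Lemma comp1l X Y (f : Hm X Y) : comp (idm Y) f = f.
Proof. by case: hL => _ comp1 _ _; case: (comp1 _ _ f). Qed.

Lemma comp1r X Y (f : Hm X Y) : comp f (idm X) = f.
Proof. by case: hL => _ comp1 _ _; case: (comp1 _ _ f). Qed.

Lemma comp_linear_r X Y Z (g : Hm Y Z) : linear (@comp _ T X Y Z g).
Proof. by case: hL => _ _ linr _ a f f'; apply: linr. Qed.

Lemma comp_linear_l X Y Z (f : Hm X Y) : linear (fun g : Hm Y Z => comp g f).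
Proof. by case: hL => _ _ _ linl a g g'; apply: linl. Qed.

Lemma comp0r X Y Z (g : Hm Y Z) : comp g (0 : Hm X Y) = 0.
Proof. exact (linear_fun0 (comp_linear_r g)). Qed.

Lemma compNr X Y Z (g : Hm Y Z) (f : Hm X Y) : comp g (- f) = - comp g f.
Proof. exact (linear_funN (comp_linear_r g) f). Qed.

Lemma compDr X Y Z (g : Hm Y Z) (f f' : Hm X Y) : comp g (f + f') = comp g f + comp g f'.
Proof. exact (linear_funD (comp_linear_r g) f f'). Qed.

Lemma comp0l X Y Z (f : Hm X Y) : comp (0 : Hm Y Z) f = 0.
Proof. exact (linear_fun0 (comp_linear_l (Z := Z) f)). Qed.

Lemma compNl X Y Z (g : Hm Y Z) (f : Hm X Y) : comp (- g) f = - comp g f.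
Proof. exact (linear_funN (comp_linear_l (Z := Z) f) g). Qed.

Lemma compDl X Y Z (g g' : Hm Y Z) (f : Hm X Y) : comp (g + g') f = comp g f + comp g' f.
Proof. exact (linear_funD (comp_linear_l (Z := Z) f) g g'). Qed.

Lemma shm_linear X Y : linear (@shm _ T X Y).
Proof. by case: hS => _ _ lin _ _ a f f'; apply: lin. Qed.

Lemma shm0 X Y : shm (0 : Hm X Y) = 0.
Proof. exact (linear_fun0 (@shm_linear X Y)). Qed.

Lemma shmN X Y (f : Hm X Y) : shm (- f) = - shm f.
Proof. exact (linear_funN (@shm_linear X Y) f). Qed.

Lemma shm1 X : shm (idm X) = idm (sh X).
Proof. by case: hS. Qed.

Lemma shm_comp X Y Z (g : Hm Y Z) (f : Hm X Y) : shm (comp g f) = comp (shm g) (shm f).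
Proof. by case: hS => _ shmM _ _ _; apply: shmM. Qed.

Lemma shm_bij X Y : bijective (@shm _ T X Y).
Proof. by case: hS => _ _ _ bij _; apply: bij. Qed.

Lemma shm_inj X Y : injective (@shm _ T X Y).
Proof. exact: bij_inj (shm_bij X Y). Qed.

Lemma shm_surj X Y (c : Hm (sh X) (sh Y)) : exists f, c = shm f.
Proof. by have [s _ shmK] := shm_bij X Y; exists (s c); rewrite shmK. Qed.

Lemma exists_zero_obj : exists Z0, is_zero_obj Z0.
Proof. by case: hT => _ [Z0ex _]. Qed.

Lemma dist_id_zero X Z0 : is_zero_obj Z0 ->
  dist (Tri (idm X) (0 : Hm X Z0) (0 : Hm Z0 (sh X))).
Proof. by case: tr1 => _ + _; apply. Qed.

Lemma dist_comp_eq0 X Y Z (f : Hm X Y) (g : Hm Y Z) (h : Hm Z (sh X)) :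
  dist (Tri f g h) -> comp g f = 0.
Proof.
move=> dt; have [Z0 Z0zero] := exists_zero_obj.
have [c [_ /= <- _]] := @tr3 _ _ (dist_id_zero X Z0zero) dt (idm X) f erefl.
exact: comp0r.
Qed.

Lemma dist_kernel_factor X Y Z W (f : Hm X Y) (g : Hm Y Z) (h : Hm Z (sh X)) :
  dist (Tri f g h) -> forall u : Hm W Y, comp g u = 0 -> exists v, u = comp f v.
Proof.
move=> /tr2 dt u gu; have [Z0 Z0zero] := exists_zero_obj.
have /tr2 dW := dist_id_zero W Z0zero.
have sq : comp (0 : Hm Z0 Z) (0 : Hm W Z0) = comp g u by rewrite gu comp0l.
have [c [_ _ /=]] := @tr3 _ _ dW dt u 0 sq.
rewrite compNr compNl shm1 comp1r => /oppr_inj shmu.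
have [v cv] := shm_surj c.
by exists v; apply: shm_inj; rewrite shmu cv shm_comp.
Qed.

Lemma dist_cokernel_factor X Y Z W (f : Hm X Y) (g : Hm Y Z) (h : Hm Z (sh X)) :
  dist (Tri f g h) -> forall u : Hm Y W, comp u f = 0 -> exists v, u = comp v g.
Proof.
case: tr1 => tiso _ _ dt u uf; have [Z0 Z0zero] := exists_zero_obj.
(* Compare with X1 -> W -> W -> X1[1], the unrotation of W -> W -> X1[1] -> W[1], where X1[1] is a zero object. *)
have [X1 [phi [psi [psiphi phipsi]]]] : exists X1 (phi : Hm (sh X1) Z0), is_iso phi.
  by case: hS => _ _ _ _; apply.
have dW : dist (Tri (idm W) (0 : Hm W (sh X1)) (0 : Hm (sh X1) (sh W))).
  apply: (tiso _ _ (dist_id_zero W Z0zero)).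
  have id_iso (V : obj T) : is_iso (idm V) by exists (idm V); rewrite comp1l.
  exists (idm W), (idm W), psi; split => //=; last by exists phi.
  by split; rewrite /= ?comp0r ?comp0l.
have dW' : dist (Tri (0 : Hm X1 W) (idm W) (0 : Hm W (sh X1))).
  by apply/tr2; rewrite shm0 oppr0.
have sq : comp u f = comp (0 : Hm X1 W) (0 : Hm X X1) by rewrite uf comp0l.
have [c [_ /= cu _]] := @tr3 _ _ dt dW' 0 u sq.
by exists c; rewrite cu comp1l.
Qed.

Section SelfExtensions.
Variables (A E B : obj T) (i : Hm A E) (j : Hm E B) (d : Hm B (sh A)).
Hypothesis dt : dist (Tri i j d).
Hypothesis homAB0 : forall x : Hm A B, x = 0.
Hypothesis homBA2_0 : forall p : Hm B (sh (sh A)), p = 0.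

Lemma shm_i_comp_eq0 (h : Hm A (sh A)) : comp (shm i) h = 0 -> h = 0.
Proof.
move=> ih; have /tr2 /tr2 dt3 := dt.
have [|v ->] := dist_kernel_factor dt3 (u := h); first by rewrite compNl ih oppr0.
by rewrite (homAB0 v) comp0r.
Qed.

Lemma comp_j_eq0 (g : Hm B (sh B)) : comp g j = 0 -> g = 0.
Proof.
move=> gj; have /tr2 dt2 := dt.
have [v ->] := dist_cokernel_factor dt2 gj.
by have [w ->] := shm_surj v; rewrite (homAB0 w) shm0 comp0l.
Qed.

Lemma shm_i_comp_extends (h : Hm A (sh A)) :
  exists f : Hm E (sh E), comp f i = comp (shm i) h.
Proof.
have /tr2 /tr2 dt3 := dt.
have [|v ev] := dist_cokernel_factor dt3 (u := shm (comp (shm i) h)).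
  by rewrite shm_comp -compmA (homBA2_0 (comp (shm h) d)) comp0r.
have [w vw] := shm_surj v.
exists (- w); apply: shm_inj.
by rewrite ev vw compNr -shm_comp compNl shmN.
Qed.

Lemma shm_j_comp_surj (u : Hm B (sh B)) : exists v : Hm B (sh E), comp (shm j) v = u.
Proof.
have /tr2 /tr2 /tr2 /tr2 dt5 := dt.
have [|v ->] := dist_kernel_factor dt5 (u := u); first exact: homBA2_0.
by exists (- v); rewrite compNr compNl.
Qed.

Definition ext_defect (x : Hm E (sh E) * (Hm A (sh A) * Hm B (sh B))) :
    Hm A (sh E) * Hm E (sh B) :=
  (comp x.1 i - comp (shm i) x.2.1, comp (shm j) x.1 - comp x.2.2 j).

Lemma ext_defect_linear : linear ext_defect.
Proof.
move=> a [f [h g]] [f' [h' g']]; rewrite /ext_defect /=.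
by rewrite !comp_linear_l !comp_linear_r; congr (_, _); rewrite /= scalerBr opprD addrACA.
Qed.

HB.instance Definition _ :=
  GRing.isLinear.Build k _ _ _ ext_defect ext_defect_linear.

Lemma ext_defect_lift (h : Hm A (sh A)) (g : Hm B (sh B)) :
  exists f, ext_defect (f, (h, g)) = 0.
Proof.
have [f0 f0i] := shm_i_comp_extends h.
have ji : comp j i = 0 := dist_comp_eq0 dt.
set e := comp (shm j) f0 - comp g j.
have ei : comp e i = 0.
  rewrite /e compDl compNl -!compmA f0i ji comp0r oppr0 addr0.
  by rewrite compmA -shm_comp ji shm0 comp0l.
have [u eu] := dist_cokernel_factor dt ei.
have [v jv] := shm_j_comp_surj u.
exists (f0 - comp v j); rewrite /ext_defect /=.
rewrite compDl compNl -compmA ji comp0r oppr0 addr0 f0i subrr.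
by rewrite compDr compNr compmA jv -eu /e opprB addrCA subrr addr0 subrr.
Qed.

Lemma ext_defect0_eq0 (w : Hm A (sh A) * Hm B (sh B)) :
  ext_defect (0, w) = 0 -> w = 0.
Proof.
case: w => h g [/eqP + /eqP]; rewrite comp0l comp0r !sub0r !oppr_eq0.
by move=> /eqP /shm_i_comp_eq0 -> /eqP /comp_j_eq0 ->.
Qed.

Lemma dim_self_ext_le :
  (\dim {:Hm A (sh A)} + \dim {:Hm B (sh B)} <= \dim {:Hm E (sh E)})%N.
Proof.
have := dimv_le_of_linear_relation (L := ext_defect).
rewrite !dimvf; apply=> [[h g] | ]; [exact: ext_defect_lift | exact: ext_defect0_eq0].
Qed.

End SelfExtensions.
End Triangulated.

Lemma serre2_hom_eq0 (k : fieldType) (T : pretri k)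
    (eta : forall X Y : obj T, Hm X Y -> Hm Y (sh (sh X)) -> k) (A B : obj T) :
    serre2 eta -> (forall x : Hm A B, x = 0) ->
  forall p : Hm B (sh (sh A)), p = 0.
Proof.
case=> eta_lin _ _ [eta_nondeg _ _] homAB0 p; apply/eqP/negPn/negP => /eta_nondeg [f].
have eta_linear : linear (fun f : Hm A B => eta A B f p : k^o) by move=> a f1 f2; apply: eta_lin.
by rewrite (homAB0 f) (linear_fun0 eta_linear) eqxx.
Qed.

Theorem lemma2p7 (k : fieldType) (T : pretri k) (A E B : obj T)
    (i : Hm A E) (j : Hm E B) (d : Hm B (sh A)) :
  (2%:R : k) != 0 ->
  K3_category T ->
  dist (Tri i j d) ->
  (forall r : int, r <= 0 -> homdim A B r = 0%N) ->
  (forall s : int, s < 0 -> homdim B B s = 0%N) ->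
  (homdim A A 1 + homdim B B 1 <= homdim E E 1)%N.
Proof.
(* Only (A,B)^0 = 0 is needed. *)
move=> _ [hT _ [eta serre]] dt homdimAB _.
have homAB0 : forall x : Hm A B, x = 0.
  exact: vect_eq0_of_dimvf0 (homdimAB 0 (lexx _)).
exact: (dim_self_ext_le hT dt homAB0 (serre2_hom_eq0 serre homAB0)).
Qed.
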